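(* Let $G$ be a connected plane (multi)graph with at least two vertices such that every internal vertex and every internal face has degree at least $4$. Let $b$ be the number of external vertices. Then the average degree of the external vertices of $G$ is at most $3-\frac{4}{b}$. In particular, $G$ has an external vertex of degree less than $3$.
   Context: A plane graph is a finite planar graph with a fixed embedding in the plane. The external face is the unbounded face; other faces are internal. A vertex is external if it lies on the boundary of the external face, and internal otherwise. The degree of a face is its degree as a vertex of the dual graph, i.e. the number of edges on its boundary counted with multiplicity. *)

(* Plane (multi)graphs are represented combinatorially as
   connected rotation systems (combinatorial maps) of genus 0, with a
   distinguished external face. *)
From HB Require Import structures.
From mathcomp Require Import all_boot all_order all_algebra.
Set Implicit Arguments. Unset Strict Implicit. Unset Printing Implicit Defensive.

Section Maps.
Variable D : finType.        (* darts = half-edges *)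
Variables (sigma alpha : D -> D).
(* sigma : rotation of darts around their origin vertex
   alpha : fixed-point-free involution pairing the two darts of an edge *)

(* face permutation: traverse the edge, then turn at the next vertex *)
Definition phi (d : D) : D := sigma (alpha d).

Definition orbits (f : D -> D) : {set {set D}} :=
  [set [set y | fconnect f x y] | x : D].

Definition vertices := orbits sigma.   (* vertices; degree = #|v| *)
Definition edges    := orbits alpha.
Definition faces    := orbits phi.     (* faces; degree = #|f| (with multiplicity) *)

Definition is_comb_map : Prop :=
  [/\ injective sigma, forall d, alpha (alpha d) = d & forall d, alpha d != d].

Definition map_connected : Prop :=
  forall x y, connect [rel a b | (b == sigma a) || (b == alpha a)] x y.

(* plane = genus 0: Euler's formula V - E + F = 2 for a connected map *)
Definition genus0 : Prop := #|vertices| + #|faces| = #|edges| + 2.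

Definition plane_graph (fo : {set D}) : Prop :=
  [/\ is_comb_map, map_connected, genus0 & fo \in faces].

Definition external_vertices (fo : {set D}) : {set {set D}} :=
  [set v in vertices | v :&: fo != set0].

Definition internal_vertices (fo : {set D}) : {set {set D}} :=
  [set v in vertices | v :&: fo == set0].

Definition internal_faces (fo : {set D}) : {set {set D}} :=
  faces :\ fo.

End Maps.

(* Double counting of darts.  With E edges, V = b + I vertices and F faces
   (of which the external one has k darts), the darts number 2E, at least
   S + 4I (S the external degree sum) and at least k + 4(F - 1) >= b + 4(F - 1).
   Adding the last two bounds and using Euler's formula V + F = E + 2 gives
   S + 4 <= 3b, which is both the average-degree bound and, by pigeonhole, the
   existence of an external vertex of degree at most 2. *)
From HB Require Import structures.
From mathcomp Require Import all_boot all_order all_algebra.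
From mathcomp Require Import zify.
Import Order.TTheory GRing.Theory Num.Theory.

Set Implicit Arguments.
Unset Strict Implicit.
Unset Printing Implicit Defensive.

Section Counting.
Variable T : finType.

Lemma leq_mul_card_sum (A : {set T}) (F : T -> nat) k :
  (forall x, x \in A -> k <= F x) -> k * #|A| <= \sum_(x in A) F x.
Proof. by move=> kF; rewrite mulnC -sum_nat_const; exact: leq_sum. Qed.

Lemma exists_lt_of_sum_lt (A : {set T}) (F : T -> nat) k :
  \sum_(x in A) F x < k * #|A| -> exists2 x, x \in A & F x < k.
Proof.
move=> sumA; apply/exists_inP; apply: contraLR sumA => /exists_inPn Fk.
by rewrite -leqNgt leq_mul_card_sum // => x /Fk; rewrite -leqNgt.
Qed.

End Counting.

Section Orbits.
Variables (T : finType) (f : T -> T).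
Hypothesis f_inj : injective f.

Lemma orbits_partition : partition (orbits f) [set: T].
Proof.
have -> : orbits f = equivalence_partition (fconnect f) setT.
  apply/setP => A; apply/imsetP/imsetP => -[x _ ->]; exists x => //;
    by apply/setP => y; rewrite !inE.
apply: equivalence_partitionP => x y z _ _ _ /=.
split=> [|xy]; first exact: connect0.
by apply/idP/idP; apply: connect_trans; rewrite // (fconnect_sym f_inj).
Qed.

Lemma sum_card_orbits : \sum_(A in orbits f) #|A| = #|T|.
Proof. by rewrite -(card_partition orbits_partition) cardsT. Qed.

Lemma orbit_of_mem A x :
  A \in orbits f -> x \in A -> A = [set y | fconnect f x y].
Proof.
case/imsetP=> z _ ->; rewrite inE => zx; apply/setP => y; rewrite !inE.
by apply/idP/idP; apply: connect_trans; rewrite // (fconnect_sym f_inj).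
Qed.

End Orbits.

Section Involution.
Variables (T : finType) (a : T -> T).
Hypotheses (aK : involutive a) (a_fpfree : forall x, a x != x).

Lemma fconnect_involutive x : [set y | fconnect a x y] = [set x; a x].
Proof.
apply/setP => y; rewrite !inE; apply/idP/orP => [xy|[] /eqP ->].
- have pair_closed : closed (frel a) [pred z | (z == x) || (z == a x)].
    move=> u w /= /eqP <-.
    by rewrite !inE -{3}[x]aK !(inj_eq (can_inj aK)) orbC.
  by have := closed_connect pair_closed xy; rewrite !inE eqxx => /esym/orP.
- exact: connect0.
- exact: fconnect1.
Qed.

Lemma card_involution_orbits : #|T| = 2 * #|orbits a|.
Proof.
rewrite -(sum_card_orbits (can_inj aK)) mulnC -sum_nat_const.
apply: eq_bigr => _ /imsetP[x _ ->].
by rewrite fconnect_involutive cards2 eq_sym a_fpfree.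
Qed.

End Involution.

Section PlaneGraph.
Variables (D : finType) (sigma alpha : D -> D) (fo : {set D}).

Lemma sum_vertices_split (F : {set D} -> nat) :
  \sum_(v in vertices sigma) F v =
  \sum_(v in external_vertices sigma fo) F v +
  \sum_(v in internal_vertices sigma fo) F v.
Proof.
rewrite (bigID (fun v => v :&: fo != set0)) /=.
by congr (_ + _); apply: eq_bigl => v; rewrite inE ?negbK.
Qed.

Lemma sum_faces_split (F : {set D} -> nat) :
  fo \in faces sigma alpha ->
  \sum_(f in faces sigma alpha) F f =
  F fo + \sum_(f in internal_faces sigma alpha fo) F f.
Proof.
move=> fo_face; rewrite (bigD1 fo) //=; congr (_ + _).
by apply: eq_bigl => f; rewrite !inE andbC.
Qed.

Lemma external_vertices_gt0 :
  fo \in faces sigma alpha -> 0 < #|external_vertices sigma fo|.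
Proof.
case/imsetP=> x _ def_fo; apply/card_gt0P.
exists [set y | fconnect sigma x y]; rewrite inE imset_f //=.
by apply/set0Pn; exists x; rewrite !inE connect0 def_fo inE connect0.
Qed.

Lemma card_external_vertices_le :
  injective sigma -> #|external_vertices sigma fo| <= #|fo|.
Proof.
move=> sigma_inj.
apply: leq_trans (leq_imset_card (fun d => [set y | fconnect sigma d y]) fo).
apply/subset_leq_card/subsetP => v; rewrite inE => /andP[v_vertex].
case/set0Pn=> d; rewrite inE => /andP[dv dfo].
by rewrite (orbit_of_mem sigma_inj v_vertex dv) imset_f.
Qed.

Lemma plane_external_degree_bound :
  plane_graph sigma alpha fo ->
  (forall v, v \in internal_vertices sigma fo -> 4 <= #|v|) ->
  (forall f, f \in internal_faces sigma alpha fo -> 4 <= #|f|) ->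
  \sum_(v in external_vertices sigma fo) #|v| + 4
    <= 3 * #|external_vertices sigma fo|.
Proof.
case=> -[sigma_inj alphaK alpha_fpfree] _ euler fo_face ideg fdeg.
have phi_inj : injective (phi sigma alpha).
  by move=> x y /sigma_inj /(can_inj alphaK).
have darts_edges : #|D| = 2 * #|edges alpha|.
  exact: card_involution_orbits alphaK alpha_fpfree.
have darts_vertices := sum_card_orbits sigma_inj.
rewrite [LHS](sum_vertices_split (fun v => #|v|)) in darts_vertices.
have card_vertices := sum_vertices_split (fun => 1).
rewrite !sum1_card in card_vertices.
have darts_faces := sum_card_orbits phi_inj.
rewrite [LHS](sum_faces_split (fun f => #|f|) fo_face) in darts_faces.
have card_faces := sum_faces_split (fun => 1) fo_face.
rewrite !sum1_card in card_faces.
have := leq_mul_card_sum ideg; have := leq_mul_card_sum fdeg.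
have := card_external_vertices_le sigma_inj.
rewrite /genus0 in euler; lia.
Qed.

End PlaneGraph.

Lemma ler_divr_subr (R : realFieldType) (m n c k : nat) :
  (0 < n)%N -> (m + k <= c * n)%N ->
  (m%:R / n%:R <= c%:R - k%:R / n%:R :> R)%R.
Proof.
move=> n_gt0 mk_le; have n_pos : (0 < n%:R :> R)%R by rewrite ltr0n.
rewrite ler_pdivrMr // mulrBl divfK ?gt_eqF // lerBrDr -!natrD -natrM.
by rewrite ler_nat.
Qed.

Theorem lemma6p4 (D : finType) (sigma alpha : D -> D) (fo : {set D}) :
  plane_graph sigma alpha fo ->
  2 <= #|vertices sigma| ->
  (forall v, v \in internal_vertices sigma fo -> 4 <= #|v|) ->
  (forall f, f \in internal_faces sigma alpha fo -> 4 <= #|f|) ->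
  let b := #|external_vertices sigma fo| in
  ((\sum_(v in external_vertices sigma fo) #|v|)%:R / b%:R
     <= 3 - 4 / b%:R :> rat)%R
  /\ exists2 v, v \in external_vertices sigma fo & #|v| < 3.
Proof.
move=> plane _ ideg fdeg b.
have b_gt0 : 0 < b by case: plane => _ _ _ /external_vertices_gt0.
have bound := plane_external_degree_bound plane ideg fdeg.
split; first exact: ler_divr_subr.
by apply: exists_lt_of_sum_lt; rewrite -/b; lia.
Qed.
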